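(* Let $T>0$ and let $\theta:[0,T]\to[0,+\infty)$ be a continuous non-increasing function such that, for some integer $m\ge1$ and some constant $c>0$, $\theta^{2m-1}(t_1)\big(\theta(t_2)-\theta(t_1)\big)\le -c(t_2-t_1)\theta^{2m}(t_2)$ for all $0\le t_1\le t_2\le T$. Then $\theta(t)\le e^{-ct}\theta(0)$ for all $t\in[0,T]$. *)

From Stdlib Require Import Reals.
Open Scope R_scope.

(* theta : [0,T] -> R is modelled as a total function R -> R of which only the
   values on [0,T] matter. Continuity on [0,T] is continuity relative to [0,T]. *)
Definition in_interval (T t : R) : Prop := 0 <= t <= T.

Definition continuous_on_0T (T : R) (f : R -> R) : Prop :=
  forall t, in_interval T t -> limit1_in f (in_interval T) (f t) t.

From Stdlib Require Import Reals Lra Lia Classical.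
Open Scope R_scope.

(* For [rho < 1], continuity makes [theta v >= rho * theta u] near every point
   where [theta] is positive; there the hypothesis gives the one-step decay
   [theta v <= theta u * (1 - c rho^(2m) (v - u))], so [theta u * exp (k u)]
   with [k = c rho^(2m)] is locally, hence globally, nonincreasing.  This
   gives the rate [k] for every [rho < 1], and Bernoulli's inequality lets
   [rho] tend to [1]. *)

Lemma bernoulli_ineq (x : R) (n : nat) : -1 <= x -> 1 + INR n * x <= (1 + x) ^ n.
Proof.
  intros Hx; induction n as [|n IH]; [simpl; lra|].
  rewrite S_INR, <- tech_pow_Rmult.
  assert (0 <= INR n) by apply pos_INR.
  assert ((1 + x) * (1 + INR n * x) <= (1 + x) * (1 + x) ^ n)
    by (apply Rmult_le_compat_l; lra).
  nra.
Qed.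

Lemma le_of_forall_mul_one_sub_le (a b K : R) :
  (forall x, 0 < x < 1 -> a * (1 - K * x) <= b) -> a <= b.
Proof.
  intros H; apply Rle_plus_epsilon; intros eps Heps.
  set (x := Rmin (1 / 2) (eps / (Rabs (a * K) + 1))).
  assert (Habs : 0 <= Rabs (a * K)) by apply Rabs_pos.
  assert (Hx0 : 0 < x).
  { apply Rmin_glb_lt; [lra | apply Rdiv_lt_0_compat; lra]. }
  assert (Hx1 : x <= 1 / 2) by apply Rmin_l.
  assert (Hxeps : x * (Rabs (a * K) + 1) <= eps).
  { assert (x <= eps / (Rabs (a * K) + 1)) by apply Rmin_r.
    apply (Rmult_le_compat_r (Rabs (a * K) + 1)) in H0; [|lra].
    unfold Rdiv in H0; rewrite Rmult_assoc, Rinv_l in H0; lra. }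
  assert (a * K * x <= Rabs (a * K) * x)
    by (apply Rmult_le_compat_r; [lra | apply RRle_abs]).
  specialize (H x ltac:(lra)); nra.
Qed.

Lemma locally_nonincreasing_le (F : R -> R) (a b : R) :
  a <= b ->
  (forall s, a <= s <= b -> exists d, 0 < d /\
     forall u v, a <= u -> u <= v -> v <= b ->
       Rabs (u - s) < d -> Rabs (v - s) < d -> F v <= F u) ->
  F b <= F a.
Proof.
  intros Hab Hloc.
  set (A := fun s => a <= s <= b /\ F s <= F a).
  destruct (completeness A) as [sg [Hub Hlub]].
  { exists b; intros x [Hx _]; lra. }
  { exists a; split; [lra | apply Rle_refl]. }
  assert (Hsg : a <= sg <= b).
  { split; [apply Hub; split; [lra | apply Rle_refl]|].
    apply Hlub; intros x [Hx _]; lra. }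
  destruct (Hloc sg Hsg) as [d [Hd Hmono]].
  assert (A_sg : F sg <= F a).
  { destruct (classic (exists x, A x /\ sg - d < x)) as [[x [[Hx HFx] Hxd]] | Hnone].
    - assert (x <= sg) by (apply Hub; split; assumption).
      assert (F sg <= F x).
      { apply Hmono; try lra; apply Rabs_def1; lra. }
      lra.
    - assert (sg <= sg - d); [|lra].
      apply Hlub; intros x Ax; apply Rnot_lt_le; intros Hx.
      apply Hnone; exists x; split; assumption. }
  destruct (Rle_lt_or_eq_dec sg b (proj2 Hsg)) as [Hlt | <-]; [exfalso | exact A_sg].
  set (y := Rmin b (sg + d / 2)).
  assert (Hy : sg < y) by (apply Rmin_glb_lt; lra).
  assert (y <= b) by apply Rmin_l.
  assert (y <= sg + d / 2) by apply Rmin_r.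
  assert (F y <= F sg).
  { apply Hmono; try lra; apply Rabs_def1; lra. }
  assert (y <= sg) by (apply Hub; split; lra).
  lra.
Qed.

Lemma limit1_in_ratio_near (f : R -> R) (D : R -> Prop) (s rho : R) :
  limit1_in f D (f s) s -> 0 < f s -> 0 <= rho < 1 ->
  exists d, 0 < d /\ forall u v, D u -> D v ->
    Rabs (u - s) < d -> Rabs (v - s) < d -> rho * f u <= f v.
Proof.
  intros Hlim Hs Hrho.
  destruct (Hlim ((1 - rho) * f s / 2) ltac:(nra)) as [d [Hd Hnear]].
  exists d; split; [exact Hd|]; intros u v Du Dv Hu Hv.
  pose proof (Hnear u (conj Du Hu)) as Nu; pose proof (Hnear v (conj Dv Hv)) as Nv.
  simpl in Nu, Nv; unfold R_dist in Nu, Nv.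
  apply Rabs_def2 in Nu; apply Rabs_def2 in Nv.
  nra.
Qed.

Lemma pow_decay_step (n : nat) (x y rho c h : R) :
  (1 <= n)%nat -> 0 < x -> 0 <= rho -> rho * x <= y -> 0 <= c -> 0 <= h ->
  x ^ (n - 1) * (y - x) <= - c * h * y ^ n ->
  y <= x * (1 - c * rho ^ n * h).
Proof.
  intros Hn Hx Hrho Hy Hc Hh Hstep.
  assert (Hpow : (rho * x) ^ n <= y ^ n) by (apply pow_incr; nra).
  rewrite Rpow_mult_distr in Hpow.
  assert (Hxn : x ^ n = x ^ (n - 1) * x).
  { replace n with (S (n - 1)) at 1 by lia; simpl; ring. }
  assert (Hpos : 0 < x ^ (n - 1)) by (apply pow_lt; exact Hx).
  assert (0 <= c * h) by nra.
  assert (c * h * (rho ^ n * x ^ n) <= c * h * y ^ n)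
    by (apply Rmult_le_compat_l; assumption).
  apply (Rmult_le_reg_l (x ^ (n - 1))); [exact Hpos|].
  rewrite Hxn in *; nra.
Qed.

Lemma mul_exp_le_of_le_mul_one_sub (x y k u v : R) :
  0 <= x -> y <= x * (1 - k * (v - u)) -> y * exp (k * v) <= x * exp (k * u).
Proof.
  intros Hx Hy.
  assert (1 - k * (v - u) <= exp (k * u - k * v))
    by (pose proof (exp_ineq1_le (k * u - k * v)); lra).
  assert (y <= x * exp (k * u - k * v)) by nra.
  replace (x * exp (k * u)) with (x * exp (k * u - k * v) * exp (k * v))
    by (rewrite Rmult_assoc, <- exp_plus; f_equal; f_equal; ring).
  pose proof (exp_pos (k * v)); nra.
Qed.

Section Decay.

Variables (T c : R) (theta : R -> R) (m : nat).
Hypotheses (theta_cont : continuous_on_0T T theta)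
  (theta_noninc : forall t1 t2, 0 <= t1 -> t1 <= t2 -> t2 <= T -> theta t2 <= theta t1)
  (m_pos : (1 <= m)%nat) (c_pos : 0 < c)
  (theta_ineq : forall t1 t2, 0 <= t1 -> t1 <= t2 -> t2 <= T ->
     theta t1 ^ (2 * m - 1) * (theta t2 - theta t1)
       <= - c * (t2 - t1) * theta t2 ^ (2 * m)).

Lemma theta_decays_at_slower_rate (rho t : R) :
  0 < rho < 1 -> 0 <= t <= T -> 0 < theta t ->
  theta t * exp (c * rho ^ (2 * m) * t) <= theta 0.
Proof.
  intros Hrho Ht Htheta.
  set (k := c * rho ^ (2 * m)).
  replace (theta 0) with (theta 0 * exp (k * 0)) by (rewrite Rmult_0_r, exp_0; ring).
  apply (locally_nonincreasing_le (fun u => theta u * exp (k * u))); [lra|].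
  intros s Hs.
  assert (Hpos_s : 0 < theta s) by (pose proof (theta_noninc s t); lra).
  destruct (limit1_in_ratio_near theta (in_interval T) s rho
              (theta_cont s ltac:(unfold in_interval; lra)) Hpos_s ltac:(lra))
    as [d [Hd Hnear]].
  exists d; split; [exact Hd|]; intros u v Hu Huv Hv Hus Hvs.
  assert (Hpos_u : 0 < theta u) by (pose proof (theta_noninc u t); lra).
  apply mul_exp_le_of_le_mul_one_sub; [lra|].
  apply (pow_decay_step (2 * m) _ _ rho c); try lra.
  - lia.
  - apply Hnear; unfold in_interval; try lra; assumption.
  - apply theta_ineq; lra.
Qed.

Lemma theta_le_exp_mul_one_sub (x t : R) :
  0 < x < 1 -> 0 <= t <= T -> 0 < theta t ->
  theta t * (1 - 2 * INR m * c * t * x) <= exp (- c * t) * theta 0.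
Proof.
  intros Hx Ht Htheta.
  pose proof (theta_decays_at_slower_rate (1 - x) t ltac:(lra) Ht Htheta) as Hdecay.
  pose proof (bernoulli_ineq (- x) (2 * m) ltac:(lra)) as Hbern.
  rewrite mult_INR in Hbern; simpl (INR 2) in Hbern.
  replace (1 + - x) with (1 - x) in Hbern by ring.
  set (K := 2 * INR m * c * t * x).
  assert (Hrate : exp (c * t - K) <= exp (c * (1 - x) ^ (2 * m) * t)).
  { assert (Hexp : c * t - K <= c * (1 - x) ^ (2 * m) * t)
      by (unfold K; assert (0 <= c * t) by nra; nra).
    destruct (Rle_lt_or_eq_dec _ _ Hexp) as [Hlt | ->]; [|apply Rle_refl].
    left; apply exp_increasing; exact Hlt. }
  assert (Hslow : theta t * exp (c * t - K) <= theta 0).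
  { apply Rle_trans with (2 := Hdecay); apply Rmult_le_compat_l; lra. }
  assert (Hsplit : exp (- K) = exp (c * t - K) * exp (- c * t))
    by (rewrite <- exp_plus; f_equal; ring).
  assert (1 - K <= exp (- K)) by (pose proof (exp_ineq1_le (- K)); lra).
  assert (theta t * (1 - K) <= theta t * exp (- K)) by (apply Rmult_le_compat_l; lra).
  pose proof (exp_pos (- c * t)); nra.
Qed.

End Decay.

Theorem lemma8p2 (T : R) (theta : R -> R) (m : nat) (c : R) :
  0 < T ->
  continuous_on_0T T theta ->
  (forall t, in_interval T t -> 0 <= theta t) ->
  (forall t1 t2, 0 <= t1 -> t1 <= t2 -> t2 <= T -> theta t2 <= theta t1) ->
  (1 <= m)%nat ->
  0 < c ->
  (forall t1 t2, 0 <= t1 -> t1 <= t2 -> t2 <= T ->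
     theta t1 ^ (2 * m - 1) * (theta t2 - theta t1)
       <= - c * (t2 - t1) * theta t2 ^ (2 * m)) ->
  forall t, in_interval T t -> theta t <= exp (- c * t) * theta 0.
Proof.
  intros _ Hcont Hpos Hmon Hm Hc Hineq t Ht.
  destruct (Rle_or_lt (theta t) 0) as [Hzero | Htheta].
  - assert (0 <= theta 0) by (apply Hpos; unfold in_interval in *; lra).
    pose proof (exp_pos (- c * t)); nra.
  - apply (le_of_forall_mul_one_sub_le _ _ (2 * INR m * c * t)); intros x Hx.
    exact (theta_le_exp_mul_one_sub T c theta m Hcont Hmon Hm Hc Hineq x t Hx Ht Htheta).
Qed.
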